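(* For every finite graph $G$: (1) $\mathsf{cdeg}(G) \leq \widetilde{\omega}(G)\cdot(\mathsf{cideg}(G)-1)$; (2) $\widetilde{\omega}(G) \leq 2^{\mathsf{cdeg}(G)}$; (3) $\mathsf{cideg}(G) \leq \mathsf{cdeg}(G)+1$.
   Context: Two vertices of $G$ are equivalent if they lie in exactly the same maximal cliques of $G$. $\widetilde{\omega}(G)$ is the maximum over maximal cliques $K$ of the number of equivalence classes meeting $K$; $\mathsf{cideg}(G)$ is the maximum over vertices $v$ of the number of maximal cliques containing $v$; $\mathsf{cdeg}(G)$ (clique-degree) is the maximum degree of the graph whose vertices are the maximal cliques of $G$, two distinct maximal cliques adjacent iff they intersect. *)

From mathcomp Require Import all_boot.
Set Implicit Arguments. Unset Strict Implicit. Unset Printing Implicit Defensive.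

(* A finite simple graph: vertex type T : finType, adjacency e : rel T,
   assumed symmetric and irreflexive in the theorem. *)
Section CliqueParams.
Variables (T : finType) (e : rel T).

Definition clique (K : {set T}) : bool :=
  [forall x in K, forall y in K, (x != y) ==> e x y].

Definition mcliques : {set {set T}} := [set K | maxset clique K].

Definition cliques_of (v : T) : {set {set T}} := [set K in mcliques | v \in K].

Definition clique_equiv (u v : T) : bool := cliques_of u == cliques_of v.

Definition eq_classes : {set {set T}} :=
  equivalence_partition clique_equiv [set: T].

Definition wt_omega : nat :=
  \max_(K in mcliques) #|[set B in eq_classes | [exists x in B, x \in K]]|.

Definition cideg : nat := \max_(v : T) #|cliques_of v|.

(* clique-degree: max degree of the clique graph. *)
Definition cdeg : nat :=
  \max_(K in mcliques)
     #|[set K' in mcliques | (K' != K) && (K :&: K' != set0)]|.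

End CliqueParams.

From mathcomp Require Import all_boot.
From mathcomp Require Import unstable.

Set Implicit Arguments. Unset Strict Implicit. Unset Printing Implicit Defensive.

(* Fix a maximal clique K. Every maximal clique K' <> K meeting K contains
   some x in K, so the neighbourhood N(K) of K in the clique graph is the
   union of the sets cliques_of x :\ K over x in K, each of size at most
   cideg - 1; and the equivalence classes meeting K correspond bijectively
   to the distinct sets cliques_of x with x in K. This gives (1) by the union
   bound. Since cliques_of x = K |: (cliques_of x :\ K) is determined by a
   subset of N(K), there are at most 2 ^ #|N(K)| such classes, which is (2).
   For (3), the cliques through v other than some K through v lie in N(K). *)

Section CliqueGraph.
Variables (T : finType) (e : rel T).

Local Notation P := (eq_classes e).

Definition clique_nbhd (K : {set T}) : {set {set T}} :=
  [set K' in mcliques e | (K' != K) && (K :&: K' != set0)].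

Definition classes_meeting (K : {set T}) : {set {set T}} :=
  [set B in P | [exists x in B, x \in K]].

Lemma clique_equiv_equivalence :
  {in [set: T] & &, equivalence_rel (clique_equiv e)}.
Proof.
by move=> x y z _ _ _; rewrite /clique_equiv eqxx; split=> // /eqP ->.
Qed.

Lemma eq_classes_partition : partition P [set: T].
Proof. exact: equivalence_partitionP clique_equiv_equivalence. Qed.

Lemma pblock_eq_classes x :
  pblock P x = cliques_of e @^-1: [set cliques_of e x].
Proof.
apply/setP=> y; rewrite !inE eq_sym.
by rewrite (pblock_equivalence_partition clique_equiv_equivalence) ?inE.
Qed.

Lemma classes_meetingE K : classes_meeting K = pblock P @: K.
Proof.
have [/eqP coverP tiP _] := and3P eq_classes_partition.
have cover_x x : x \in cover P by rewrite coverP inE.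
apply/setP=> B; apply/idP/imsetP => [|[x xK ->]].
  rewrite inE => /andP[PB /existsP[x /andP[xB xK]]].
  by exists x; rewrite ?(def_pblock tiP PB xB).
rewrite inE pblock_mem //; apply/existsP; exists x.
by rewrite mem_pblock cover_x.
Qed.

Lemma card_classes_meeting K : #|classes_meeting K| = #|cliques_of e @: K|.
Proof.
have -> : classes_meeting K =
    (fun S => cliques_of e @^-1: [set S]) @: (cliques_of e @: K).
  rewrite classes_meetingE -imset_comp.
  by apply: eq_imset => x; apply: pblock_eq_classes.
apply: card_in_imset.
move=> _ _ /imsetP[x _ ->] /imsetP[y _ ->] /setP/(_ x).
by rewrite !inE eqxx => /esym/eqP.
Qed.

Lemma cliques_ofD1_sub_nbhd x (K : {set T}) :
  x \in K -> cliques_of e x :\ K \subset clique_nbhd K.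
Proof.
move=> xK; apply/subsetP=> K'; rewrite !inE => /andP[-> /andP[-> xK']] /=.
by apply/set0Pn; exists x; rewrite inE xK.
Qed.

Lemma clique_nbhdE K :
  clique_nbhd K = \bigcup_(S in cliques_of e @: K) (S :\ K).
Proof.
apply/eqP; rewrite eqEsubset; apply/andP; split.
  apply/subsetP=> K'; rewrite inE => /andP[K'M /andP[K'K /set0Pn[x]]].
  rewrite inE => /andP[xK xK']; apply/bigcupP; exists (cliques_of e x).
    exact: imset_f.
  by rewrite in_setD1 K'K inE K'M.
by apply/bigcupsP=> _ /imsetP[x xK ->]; apply: cliques_ofD1_sub_nbhd.
Qed.

Lemma card_cliques_ofD1 x (K : {set T}) : K \in mcliques e -> x \in K ->
  #|cliques_of e x :\ K| <= cideg e - 1.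
Proof.
move=> KM xK; have Kx : K \in cliques_of e x by rewrite inE KM.
have := @leq_bigmax _ (fun v => #|cliques_of e v|) x.
by rewrite (cardsD1 K) Kx add1n => /(leq_sub2r 1); rewrite subn1.
Qed.

Lemma card_clique_nbhd_le K : K \in mcliques e ->
  #|clique_nbhd K| <= #|classes_meeting K| * (cideg e - 1).
Proof.
move=> KM; rewrite clique_nbhdE card_classes_meeting -sum_nat_const.
apply: leq_trans (card_big_setU _ _ _) _.
by apply: leq_sum => _ /imsetP[x xK ->]; apply: card_cliques_ofD1.
Qed.

Lemma card_classes_meeting_le K : K \in mcliques e ->
  #|classes_meeting K| <= 2 ^ #|clique_nbhd K|.
Proof.
move=> KM; rewrite card_classes_meeting -card_powerset.
(* [K |: _] undoes [_ :\ K] on the sets [cliques_of e x], [x \in K]. *)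
have -> : cliques_of e @: K =
    (fun S => K |: S) @: [set cliques_of e x :\ K | x in K].
  rewrite -imset_comp; apply: eq_in_imset => x xK /=.
  by rewrite setD1K // inE KM.
apply: leq_trans (leq_imset_card _ _) (subset_leq_card _).
by apply/subsetP=> _ /imsetP[x xK ->]; rewrite inE cliques_ofD1_sub_nbhd.
Qed.

Lemma card_cliques_of_le v : #|cliques_of e v| <= (cdeg e).+1.
Proof.
have [->|[K Kv]] := set_0Vmem (cliques_of e v); first by rewrite cards0.
have /andP[KM vK] : (K \in mcliques e) && (v \in K) by rewrite inE in Kv.
rewrite (cardsD1 K) Kv add1n ltnS.
apply: leq_trans (subset_leq_card (cliques_ofD1_sub_nbhd vK)) _.
exact: (@leq_bigmax_cond _ _ (fun K => #|clique_nbhd K|) K KM).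
Qed.

End CliqueGraph.

Theorem lemma5p3 (T : finType) (e : rel T)
    (e_sym : symmetric e) (e_irr : irreflexive e) :
  [/\ cdeg e <= wt_omega e * (cideg e - 1),
      wt_omega e <= 2 ^ cdeg e
    & cideg e <= (cdeg e).+1].
Proof.
split.
- apply/bigmax_leqP => K KM; apply: leq_trans (card_clique_nbhd_le KM) _.
  apply: leq_mul (leqnn _).
  exact: (@leq_bigmax_cond _ _ (fun K => #|classes_meeting e K|) K KM).
- apply/bigmax_leqP => K KM; apply: leq_trans (card_classes_meeting_le KM) _.
  rewrite leq_pexp2l //.
  exact: (@leq_bigmax_cond _ _ (fun K => #|clique_nbhd e K|) K KM).
- by apply/bigmax_leqP => v _; apply: card_cliques_of_le.
Qed.
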